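(* Suppose $R=DV$ is obtained by the lazy reduction, and let $\omega*\sigma,\omega*\tau$ ($\sigma,\tau\in K$) be a persistence pair, $\operatorname{low}R[\omega*\tau]=\omega*\sigma$. Then every simplex with nonzero coefficient in $V[\omega*\tau]$ is a cone simplex or $\omega$ (no base simplex of $K$ occurs in $V[\omega*\tau]$). Consequently the chain $z=(\partial(V[\omega*\tau]\cap(\omega*K\setminus K)))\cap K$ equals $R[\omega*\tau]\cap K$, the restriction of $R[\omega*\tau]$ to base simplices.
   Context: Coefficients are in a field $\mathbb F$. Let $K$ be a finite $\Delta$-complex in which every simplex $\sigma$ carries an integer interval $T(\sigma)=[\min\sigma,\max\sigma]$ with $\min\sigma<\max\sigma$, such that whenever $\sigma$ is a proper face of $\tau$, $\min\sigma<\min\tau<\max\tau<\max\sigma$; assume the values $\min\sigma$ ($\sigma\in K$) are pairwise distinct and the values $\max\sigma$ are pairwise distinct. The cone $\omega*K$ consists of the simplices of $K$ (''base simplices''), a new vertex $\omega$, and simplices $\omega*\sigma$ for $\sigma\in K$ (''cone simplices''), with $\partial(\omega*\sigma)=\sigma-\omega*\partial\sigma$ (for a vertex $v$, $\partial(\omega*v)=v-\omega$). The cone filtration orders base simplices by increasing $\min$, then $\omega$, then the simplices $\omega*\sigma$ by decreasing $\max\sigma$. $D$ is the boundary matrix of $\omega*K$ with rows and columns in this order. For a nonzero column $c$, $\operatorname{low}c$ is its lowest nonzero entry's index. The lazy reduction is the standard column algorithm: start with $R=D$, $V=I$; process columns left to right, and while the current column $R[j]$ is nonzero and some earlier column $R[i]$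 has $\operatorname{low}R[i]=\operatorname{low}R[j]$, replace $R[j]\leftarrow R[j]-cR[i]$, $V[j]\leftarrow V[j]-cV[i]$ with $c$ cancelling the pivot. It yields $R=DV$ with $V$ invertible upper-triangular and $R$ reduced. For a chain $c$ and set of simplices $L$, $c\cap L$ is the restriction of $c$ to simplices in $L$. *)

From HB Require Import structures.
From mathcomp Require Import all_boot all_order all_algebra.
Set Implicit Arguments. Unset Strict Implicit. Unset Printing Implicit Defensive.
Import Order.TTheory GRing.Theory Num.Theory.

(* ---------- Finite Delta-complexes ----------
   The simplices of K are indexed by 'I_n.  [dim s] is the dimension of s and
   [face s i] (for 0 < dim s, i <= dim s) is its i-th face d_i s. *)

Definition is_delta_complex n (dim : 'I_n -> nat) (face : 'I_n -> nat -> 'I_n) :=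
  (forall s i, (0 < dim s)%N -> (i <= dim s)%N -> dim (face s i) = (dim s).-1) /\
  (forall s i j, (1 < dim s)%N -> (i < j)%N -> (j <= dim s)%N ->
     face (face s j) i = face (face s i) j.-1).

Definition imm_face n (dim : 'I_n -> nat) (face : 'I_n -> nat -> 'I_n) : rel 'I_n :=
  fun u t => (0 < dim t)%N && [exists i : 'I_(dim t).+1, face t i == u].

Definition proper_face n dim face (s t : 'I_n) : bool :=
  [exists u, imm_face dim face u t && connect (imm_face dim face) s u].

(* the interval hypotheses T(s) = [mn s, mx s] *)
Definition interval_filtered n dim face (mn mx : 'I_n -> int) :=
  [/\ (forall s, (mn s < mx s)%R),
      injective mn, injective mx &
      (forall s t, proper_face dim face s t ->
         (mn s < mn t)%R /\ (mn t < mx t)%R /\ (mx t < mx s)%R)].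

Definition cs n := (('I_n + unit) + 'I_n)%type.
Definition Base n (s : 'I_n) : cs n := inl (inl s).
Definition Om n : cs n := inl (inr tt).
Definition Cone n (s : 'I_n) : cs n := inr s.
Definition is_base n (x : cs n) : bool :=
  match x with inl (inl _) => true | _ => false end.

Section Cone.
Variables (F : fieldType) (n : nat) (dim : 'I_n -> nat)
          (face : 'I_n -> nat -> 'I_n) (mn mx : 'I_n -> int).
Local Open Scope ring_scope.

Definition bdK (t s : 'I_n) : F :=
  if dim s == 0%N then 0
  else \sum_(i < (dim s).+1 | face s i == t) (-1) ^+ i.

(* cbd a b = coefficient of a in the boundary of b, in omega * K:
   d(omega) = 0, d(omega*v) = v - omega, d(omega*s) = s - omega*(d s). *)
Definition cbd (a b : cs n) : F :=
  match b with
  | inl (inl s) => match a with inl (inl t) => bdK t s | _ => 0 end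
  | inl (inr _) => 0
  | inr s =>
      match a with
      | inl (inl t) => (t == s)%:R
      | inl (inr _) => if dim s == 0%N then -1 else 0
      | inr t => if dim s == 0%N then 0 else - bdK t s
      end
  end.

Definition N := (n + n).+1.

(* position in the cone filtration: base simplices by increasing mn,
   then omega, then cone simplices by decreasing mx *)
Definition cpos (x : cs n) : 'I_N :=
  match x with
  | inl (inl s) => inord #|[pred t | mn t < mn s]|
  | inl (inr _) => inord n
  | inr s => inord (n.+1 + #|[pred t | mx s < mx t]|)
  end.

Definition cunpos (i : 'I_N) : cs n := odflt (Om n) [pick x | cpos x == i].

Definition coneD : 'M[F]_N := \matrix_(i, j) cbd (cunpos i) (cunpos j).

End Cone.

Section Reduction.
Variables (F : fieldType) (m : nat).
Local Open Scope ring_scope.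

Definition low (c : 'cV[F]_m) : option 'I_m :=
  [pick i | (c i 0 != 0) && [forall k : 'I_m, (i < k)%N ==> (c k 0 == 0)]].

Definition red_step (j : 'I_m) (RV : 'M[F]_m * 'M[F]_m) : 'M[F]_m * 'M[F]_m :=
  let: (R, V) := RV in
  match low (col j R) with
  | None => RV
  | Some l =>
    match [pick i : 'I_m | (i < j)%N && (low (col i R) == Some l)] with
    | None => RV
    | Some i =>
      let c := R l j / R l i in
      (\matrix_(a, b) (if b == j then R a j - c * R a i else R a b),
       \matrix_(a, b) (if b == j then V a j - c * V a i else V a b))
    end
  end.

(* each effective step strictly lowers low R[j] or zeroes R[j], so m
   iterations reach the fixed point of the while loop *)
Definition reduce_col (j : 'I_m) RV := iter m (red_step j) RV.

Definition lazy_reduction (D : 'M[F]_m) : 'M[F]_m * 'M[F]_m :=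
  foldl (fun RV j => reduce_col j RV) (D, 1%:M) (enum 'I_m).

End Reduction.

(* Call a reduction state (R, V) "t-clean" if every column whose pivot lies
   strictly below row t has a V-column vanishing on the rows above t.  Each
   elimination step adds to column j a multiple of a column i with the same
   pivot l, after which the pivot of column j drops strictly below l; so if
   it is still below t, both columns were t-clean and so is their
   combination.  In the cone filtration the base simplices occupy exactly the
   first n rows and columns, and the boundary of a base simplex is a base
   chain, so the initial state (D, 1) is n-clean.  A cone pivot lies below
   row n, hence V[omega*tau] has no base simplex, and restricting R = D V to
   the base rows only sees the non-base part of V[omega*tau]. *)

From HB Require Import structures.
From mathcomp Require Import all_boot all_order all_algebra.
From mathcomp Require Import zify.
Import Order.TTheory GRing.Theory Num.Theory.
Set Implicit Arguments. Unset Strict Implicit.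
Local Open Scope ring_scope.

Section LazyReduction.
Variables (F : fieldType) (m : nat).
Implicit Types (c : 'cV[F]_m) (D R V : 'M[F]_m) (RV : 'M[F]_m * 'M[F]_m).

Lemma lowP c l : low c = Some l ->
  c l 0 != 0 /\ forall k : 'I_m, (l < k)%N -> c k 0 = 0.
Proof.
rewrite /low; case: pickP => // x /andP[nz /forallP H] [<-]; split => // k lk.
by apply/eqP; move: (H k); rewrite lk.
Qed.

Lemma low_cancel_lt c1 c2 l l' :
  low c1 = Some l -> low c2 = Some l ->
  low (c1 - (c1 l 0 / c2 l 0) *: c2) = Some l' -> (l' < l)%N.
Proof.
move=> /lowP[nz1 z1] /lowP[nz2 z2] /lowP[+ _]; rewrite !mxE.
case: (ltngtP l l') => // [ll'|/val_inj<-].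
  by rewrite (z1 l') // (z2 l') // mulr0 subr0 eqxx.
by rewrite divfK // subrr eqxx.
Qed.

Lemma lazy_reduction_ind (P : 'M[F]_m * 'M[F]_m -> Prop) D :
  (forall j RV, P RV -> P (red_step j RV)) -> P (D, 1%:M) ->
  P (lazy_reduction D).
Proof.
move=> Pstep; rewrite /lazy_reduction.
elim: (enum _) (D, 1%:M) => //= j s IHs RV PRV; apply: IHs.
by rewrite /reduce_col; elim: (X in iter X) => //= k IHk; apply: Pstep.
Qed.

Lemma red_step_mulmx D j RV :
  RV.1 = D *m RV.2 -> (red_step j RV).1 = D *m (red_step j RV).2.
Proof.
case: RV => R V /= defR; rewrite /red_step.
case: (low (col j R)) => [l|] //; case: pickP => [i _|] //=.
apply/matrixP => a b; rewrite !mxE; case: eqP => [->|/eqP nbj].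
  rewrite defR !mxE mulr_sumr -sumrB; apply: eq_bigr => k _.
  by rewrite mxE eqxx mulrBr mulrCA.
by rewrite defR !mxE; apply: eq_bigr => k _; rewrite mxE (negbTE nbj).
Qed.

Lemma lazy_reduction_mulmx D :
  (lazy_reduction D).1 = D *m (lazy_reduction D).2.
Proof.
apply: (lazy_reduction_ind (P := fun RV => RV.1 = D *m RV.2)).
  exact: red_step_mulmx.
by rewrite mulmx1.
Qed.

Definition low_gt_Vcol_zero (t : nat) RV :=
  forall (i l : 'I_m), low (col i RV.1) = Some l -> (t < l)%N ->
  forall k : 'I_m, (k < t)%N -> RV.2 k i = 0.

Lemma red_step_low_gt_Vcol_zero t j RV :
  low_gt_Vcol_zero t RV -> low_gt_Vcol_zero t (red_step j RV).
Proof.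
case: RV => R V /= clean; rewrite /red_step.
case lowj: (low (col j R)) => [l|] //; case: pickP => [i /andP[_ /eqP lowi]|] //.
move=> i' l' /=; have [->|i'j] := eqVneq i' j; last first.
  have -> : col i' (\matrix_(a, b) (if b == j then R a j - R l j / R l i * R a i
                                     else R a b)) = col i' R.
    by apply/matrixP => a b; rewrite !mxE (negbTE i'j).
  by move=> lowi' tl' k kt; rewrite mxE (negbTE i'j); apply: clean lowi' tl' k kt.
have -> : col j (\matrix_(a, b) (if b == j then R a j - R l j / R l i * R a i
                                  else R a b))
          = col j R - ((col j R) l 0 / (col i R) l 0) *: col i R.
  by apply/matrixP => a b; rewrite !mxE eqxx.
move=> /(low_cancel_lt lowj lowi) l'l tl' k kt; rewrite mxE eqxx.
have tl : (t < l)%N by apply: ltn_trans l'l.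
by rewrite (clean j l lowj tl k kt) (clean i l lowi tl k kt) mulr0 subr0.
Qed.

Lemma lazy_reduction_Vcol_zero (t : nat) D :
  (forall i l : 'I_m, low (col i D) = Some l -> (t < l)%N -> (t <= i)%N) ->
  low_gt_Vcol_zero t (lazy_reduction D).
Proof.
move=> Dlow; apply: (lazy_reduction_ind (P := low_gt_Vcol_zero t)).
  exact: red_step_low_gt_Vcol_zero.
move=> i l /= lowi tl k kt; rewrite mxE; case: eqP => // eki.
by have := Dlow i l lowi tl; rewrite -eki; lia.
Qed.

End LazyReduction.

Section OrdinalCounting.
Variable n : nat.

Lemma card_pred_ltn (P : pred 'I_n) s : ~~ P s -> (#|P| < n)%N.
Proof.
move=> nPs; have : (#|P| <= #|predC1 s|)%N.
  by apply: subset_leq_card; apply/subsetP => t; rewrite !inE; apply: contraTneq => ->.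
by rewrite cardC1 card_ord; have := ltn_ord s; lia.
Qed.

Lemma card_lt_ltn (f : 'I_n -> int) s : (#|[pred t | (f t < f s)%R]| < n)%N.
Proof. by apply: (@card_pred_ltn _ s); rewrite inE ltxx. Qed.

Lemma card_gt_ltn (f : 'I_n -> int) s : (#|[pred t | (f s < f t)%R]| < n)%N.
Proof. by apply: (@card_pred_ltn _ s); rewrite inE ltxx. Qed.

Lemma card_lt_inj d (T : orderType d) (f : 'I_n -> T) : injective f ->
  injective (fun s => #|[pred t | (f t < f s)%O]|).
Proof.
have card_mono s s' : (f s < f s')%O ->
    (#|[pred t | (f t < f s)%O]| < #|[pred t | (f t < f s')%O]|)%N.
  move=> lt_ss'; apply: proper_card; apply/properP; split.
    by apply/subsetP => t; rewrite !inE => /lt_trans; apply.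
  by exists s; rewrite !inE ?ltxx.
move=> inj_f s s' E; case: (ltgtP (f s) (f s')) => [/card_mono|/card_mono|/inj_f] //.
  by rewrite E ltnn.
by rewrite E ltnn.
Qed.

End OrdinalCounting.

Section ConeFiltration.
Variables (F : fieldType) (n : nat) (dim : 'I_n -> nat)
          (face : 'I_n -> nat -> 'I_n) (mn mx : 'I_n -> int).
Hypotheses (inj_mn : injective mn) (inj_mx : injective mx).

Lemma cpos_val (x : cs n) : val (cpos mn mx x) =
  match x with
  | inl (inl s) => #|[pred t | mn t < mn s]|
  | inl (inr _) => n
  | inr s => n.+1 + #|[pred t | mx s < mx t]|
  end.
Proof.
rewrite /N; case: x => [[s|[]]|s] /=; rewrite inordK //; [|lia|].
  by have := card_lt_ltn mn s; lia.
by have := card_gt_ltn mx s; lia.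
Qed.

Lemma cpos_ltn_base (x : cs n) : (cpos mn mx x < n)%N = is_base x.
Proof.
rewrite cpos_val; case: x => [[s|[]]|s] /=; last lia; last lia.
exact: card_lt_ltn.
Qed.

Lemma cpos_inj : injective (cpos mn mx).
Proof.
move=> x y /(congr1 val); rewrite !cpos_val.
case: x => [[s|[]]|s]; case: y => [[t|[]]|t] //= E.
- by rewrite (card_lt_inj inj_mn E).
- by have := card_lt_ltn mn s; lia.
- by have := card_lt_ltn mn s; lia.
- by have := card_lt_ltn mn t; lia.
- lia.
- by have := card_lt_ltn mn t; lia.
- lia.
- by rewrite (@card_lt_inj _ _ _ (mx : 'I_n -> int^d) inj_mx _ _ (addnI E)).
Qed.

Lemma cpos_bij : bijective (cpos mn mx).
Proof.
apply: inj_card_bij; first exact: cpos_inj.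
by rewrite /cs !card_sum card_unit !card_ord /N; lia.
Qed.

Lemma cposK : cancel (cpos mn mx) (cunpos mn mx).
Proof.
move=> x; rewrite /cunpos; case: pickP => [y /eqP /cpos_inj -> //|/(_ x)].
by rewrite eqxx.
Qed.

Lemma cunposK : cancel (cunpos mn mx) (cpos mn mx).
Proof. exact/(bij_can_sym cpos_bij)/cposK. Qed.

Lemma coneD_cpos (a b : cs n) :
  coneD F dim face mn mx (cpos mn mx a) (cpos mn mx b) = cbd F dim face a b.
Proof. by rewrite mxE !cposK. Qed.

Lemma cbd_base (a b : cs n) :
  cbd F dim face a b != 0 -> is_base b -> is_base a.
Proof. by case: b => [[]|] //; case: a => [[]|] //=; rewrite eqxx. Qed.

Lemma coneD_low_base (i l : 'I_(N n)) :
  low (col i (coneD F dim face mn mx)) = Some l -> (n < l)%N -> (n <= i)%N.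
Proof.
move=> /lowP[+ _]; rewrite mxE -(cunposK i) -(cunposK l) coneD_cpos => nz.
apply: contraTT; rewrite -ltnNge -leqNgt cpos_ltn_base => ib.
by rewrite ltnW // cpos_ltn_base (cbd_base nz ib).
Qed.

End ConeFiltration.

Theorem mainTheorem7 (F : fieldType) (n : nat) (dim : 'I_n -> nat)
  (face : 'I_n -> nat -> 'I_n) (mn mx : 'I_n -> int) :
  is_delta_complex dim face ->
  interval_filtered dim face mn mx ->
  forall sigma tau : 'I_n,
  let RV := lazy_reduction (coneD F dim face mn mx) in
  let R := RV.1 in
  let V := RV.2 in
  let j := cpos mn mx (Cone tau) in
  low (col j R) = Some (cpos mn mx (Cone sigma)) ->
  (forall x : cs n, V (cpos mn mx x) j != 0 -> ~~ is_base x) /\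
  (forall b : 'I_n,
     \sum_(x : cs n | ~~ is_base x)
        cbd F dim face (Base b) x * V (cpos mn mx x) j
     = R (cpos mn mx (Base b)) j).
Proof.
move=> _ [_ inj_mn inj_mx _] sigma tau RV R V j low_j.
have V_nonbase x : V (cpos mn mx x) j != 0 -> ~~ is_base x.
  rewrite -(cpos_ltn_base mn mx); apply: contra_neqN => ltxn.
  have D_low := coneD_low_base (F := F) (dim := dim) (face := face) inj_mn inj_mx.
  apply: (lazy_reduction_Vcol_zero D_low low_j) => //.
  by rewrite cpos_val /=; lia.
split=> // b; rewrite /R lazy_reduction_mulmx mxE (reindex (cpos mn mx));
  last exact: onW_bij (cpos_bij inj_mn inj_mx).
rewrite [RHS](bigID (@is_base n)) [X in _ = X + _]big1 ?add0r => [|x xb].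
  by apply: eq_bigr => x _; rewrite coneD_cpos.
have Vx0 : V (cpos mn mx x) j = 0 by apply/eqP; apply: contraTT xb => /V_nonbase.
by rewrite Vx0 mulr0.
Qed.
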